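(* Let $G$ be a network (as in the context) that contains a directed circuit, and consider (BBMG) on $G$ with $a_i>0$, $b_i\in\mathbb{R}\setminus\{0\}$, $d_i\in\mathbb{R}$. Then there is no non-constant travelling wave solution $u$ of (BBMG) with all speeds $c_i>0$ whose profiles $\varphi_i$ are all solitary.
   Context: A network $G$ is obtained from a non-empty, simple, connected, at most countable, locally finite graph by realizing each edge $\mathsf{e}_j$ ($j\in\mathbf{E}\subset\mathbb{N}$) as the image of a $\mathcal{C}^2$ Jordan curve $\pi_j:[0,\ell_j]\to\mathbb{R}^m$ with arc-length parameter $x_j$; distinct edges meet in at most one common vertex. $N(\mathsf{v})$ is the set of indices of edges at $\mathsf{v}$; $V_r$ the set of vertices of degree $\ge2$; $\iota_{ij}=1$ if $\pi_j(\ell_j)=\mathsf{v}_i$, $-1$ if $\pi_j(0)=\mathsf{v}_i$, $0$ otherwise. A directed circuit is a sequence of $n\ge2$ edges $\mathsf{e}_{1},\dots,\mathsf{e}_{n}$ with $\pi_{i}(\ell_{i})=\pi_{i+1}(0)$ for $1\le i<n$ and $\pi_n(\ell_n)=\pi_1(0)$. (BBMG): $\partial_t u_i - a_i\partial_i^2\partial_t u_i + b_i u_i\partial_i u_i + d_i\partial_i u_i=0$ on each $\mathsf{e}_i$, $t>0$; for each $\mathsf{v}_p\in V_r$, $t\ge0$: $u_j(t,\mathsf{v}_p)=u_k(t,\mathsf{v}_p)$ for $j,k\in N(\mathsf{v}_p)$ and $\sum_j\iota_{pj}a_j\partial_ju_j(t,\mathsf{v}_p)=0$ (values at $\mathsf{v}_p$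 meaning at $x_j=\pi_j^{-1}(\mathsf{v}_p)$, $\partial_j=\partial/\partial x_j$). A strong solution is continuous on $G$ with $u_i\in\mathcal{C}^{1,1}(\mathsf{e}_i\times[0,\infty))$, $\partial_tu_i\in\mathcal{C}^{2,0}(\mathsf{e}_i\times[0,\infty))$, satisfying (BBMG) pointwise. A travelling wave is a strong solution with speeds $c_i\ge0$ and $\varphi_i\in\mathcal{C}^3(\mathbb{R})$ such that $u_i(x_i,t)=\varphi_i(x_i-c_it)$ for $x_i\in\mathsf{e}_i$, $t\ge0$. A function $\varphi:\mathbb{R}\to\mathbb{R}$ is solitary if it has at most one local extremum and $\lim_{z\to\pm\infty}\varphi(z)$ exist in $\mathbb{R}$. *)

From Stdlib Require Import Reals List Relations ClassicalEpsilon.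
From Coquelicot Require Import Coquelicot.
Open Scope R_scope.

(* Edges: indices j : nat with E j.
   Edge j is an arc of length ell j from src j = pi_j(0) to tgt j = pi_j(ell_j),
   parametrised by arc length x_j in [0, ell j]. *)

Definition incident {V : Type} (src tgt : nat -> V) (j : nat) (v : V) : Prop :=
  src j = v \/ tgt j = v.

Definition adjacent {V : Type} (E : nat -> Prop) (src tgt : nat -> V) (v w : V) : Prop :=
  exists j, E j /\ ((src j = v /\ tgt j = w) \/ (src j = w /\ tgt j = v)).

(* non-empty, simple, connected, at most countable, locally finite graph,
   realised with edges of positive length whose endpoints are distinct *)
Definition is_network {V : Type} (E : nat -> Prop) (src tgt : nat -> V)
    (ell : nat -> R) : Prop :=
  inhabited V /\
  (exists f : V -> nat, forall v w, f v = f w -> v = w) /\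
  (forall j, E j -> 0 < ell j) /\
  (forall j, E j -> src j <> tgt j) /\
  (forall j k, E j -> E k -> j <> k ->
     ~ ((src j = src k /\ tgt j = tgt k) \/ (src j = tgt k /\ tgt j = src k))) /\
  (forall v w, clos_refl_trans V (adjacent E src tgt) v w) /\
  (forall v, exists l : list nat, forall j, E j -> incident src tgt j v -> In j l).

Definition has_directed_circuit {V : Type} (E : nat -> Prop) (src tgt : nat -> V) : Prop :=
  exists l : list nat,
    (2 <= length l)%nat /\ (forall j, In j l -> E j) /\
    (forall i, (S i < length l)%nat -> tgt (nth i l 0%nat) = src (nth (S i) l 0%nat)) /\
    tgt (last l 0%nat) = src (hd 0%nat l).

Definition in_Vr {V : Type} (E : nat -> Prop) (src tgt : nat -> V) (v : V) : Prop :=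
  exists j k, j <> k /\ E j /\ E k /\ incident src tgt j v /\ incident src tgt k v.

Definition iota {V : Type} (src tgt : nat -> V) (v : V) (j : nat) : R :=
  if excluded_middle_informative (tgt j = v) then 1
  else if excluded_middle_informative (src j = v) then -1 else 0.

(* pi_j^{-1}(v) : the arc-length coordinate of vertex v on edge j *)
Definition pos {V : Type} (src tgt : nat -> V) (ell : nat -> R) (j : nat) (v : V) : R :=
  if excluded_middle_informative (tgt j = v) then ell j else 0.

Definition C3 (f : R -> R) : Prop :=
  (forall x, ex_derive_n f 1 x) /\ (forall x, ex_derive_n f 2 x) /\
  (forall x, ex_derive_n f 3 x) /\ (forall x, continuous (Derive_n f 3) x).

Definition local_extremum (f : R -> R) (z : R) : Prop :=
  (exists delta, 0 < delta /\ forall y, Rabs (y - z) < delta -> f y <= f z) \/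
  (exists delta, 0 < delta /\ forall y, Rabs (y - z) < delta -> f z <= f y).

Definition solitary (f : R -> R) : Prop :=
  (forall z1 z2, local_extremum f z1 -> local_extremum f z2 -> z1 = z2) /\
  (exists l, is_lim f p_infty (Finite l)) /\
  (exists l, is_lim f m_infty (Finite l)).

(* u : nat -> R -> R -> R, u j x t = u_j(x_j, t) *)
Definition dt (u : R -> R -> R) (x t : R) : R := Derive (fun s => u x s) t.
Definition dx (u : R -> R -> R) (x t : R) : R := Derive (fun y => u y t) x.
Definition dxxt (u : R -> R -> R) (x t : R) : R :=
  Derive (fun y => Derive (fun y' => dt u y' t) y) x.

Definition sumR (l : list nat) (f : nat -> R) : R := fold_right Rplus 0 (map f l).

Definition solves_BBMG {V : Type} (E : nat -> Prop) (src tgt : nat -> V)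
    (ell a b d : nat -> R) (u : nat -> R -> R -> R) : Prop :=
  (forall i, E i -> forall x t, 0 <= x <= ell i -> 0 < t ->
     dt (u i) x t - a i * dxxt (u i) x t + b i * u i x t * dx (u i) x t
     + d i * dx (u i) x t = 0) /\
  (forall v, in_Vr E src tgt v -> forall t, 0 <= t ->
     forall j k, E j -> E k -> incident src tgt j v -> incident src tgt k v ->
       u j (pos src tgt ell j v) t = u k (pos src tgt ell k v) t) /\
  (forall v, in_Vr E src tgt v -> forall t, 0 <= t ->
     forall l : list nat, NoDup l ->
       (forall j, In j l <-> (E j /\ incident src tgt j v)) ->
       sumR l (fun j => iota src tgt v j * a j * dx (u j) (pos src tgt ell j v) t) = 0).

Definition wave (c : nat -> R) (phi : nat -> R -> R) : nat -> R -> R -> R :=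
  fun i x t => phi i (x - c i * t).

Definition travelling_wave {V : Type} (E : nat -> Prop) (src tgt : nat -> V)
    (ell a b d : nat -> R) (c : nat -> R) (phi : nat -> R -> R) : Prop :=
  (forall i, E i -> 0 <= c i) /\
  (forall i, E i -> C3 (phi i)) /\
  solves_BBMG E src tgt ell a b d (wave c phi).

Definition nonconstant_on (E : nat -> Prop) (ell : nat -> R)
    (u : nat -> R -> R -> R) : Prop :=
  exists i j x y t s, E i /\ E j /\ 0 <= x <= ell i /\ 0 <= y <= ell j /\
    0 <= t /\ 0 <= s /\ u i x t <> u j y s.

(* Continuity at the vertices of a directed circuit e_0, ..., e_(n-1) transports
   the value of a travelling wave from the tail of each edge to the tail of the
   next one with delay tau_k = ell_k / c_k.  Going once around the circuit, the
   profile phi_0 of the first edge satisfies phi_0(z - c_0 P) = phi_0(z) for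
   z <= 0, where P is the total delay.  A function that is periodic on a left
   ray and has a limit at -oo is constant there, so every point of that ray is
   a local extremum, which is impossible for a solitary profile. *)
From Pilot Require Import Defs.
From Stdlib Require Import Reals List Lra Lia ClassicalEpsilon.
From Coquelicot Require Import Coquelicot.
Open Scope R_scope.

Lemma is_lim_seq_arith_m_infty (z Q : R) :
  0 < Q -> is_lim_seq (fun n => z - INR n * Q) m_infty.
Proof.
  intros HQ.
  apply is_lim_seq_opp.
  apply (is_lim_seq_ext (fun n => INR n * Q + - z)); [intros n; ring|].
  eapply is_lim_seq_plus.
  - apply is_lim_seq_scal_r, is_lim_seq_INR.
  - apply is_lim_seq_const.
  - simpl. destruct (Rle_dec 0 Q) as [H|H]; [|lra].
    destruct (Rle_lt_or_eq_dec 0 Q H); [reflexivity|lra].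
Qed.

Lemma periodic_left_is_lim_const (f : R -> R) (z0 Q L : R) :
  0 < Q -> (forall z, z <= z0 -> f (z - Q) = f z) ->
  is_lim f m_infty L -> forall z, z <= z0 -> f z = L.
Proof.
  intros HQ Hper Hlim z Hz.
  assert (Hiter : forall n, f (z - INR n * Q) = f z).
  { induction n as [|n IH]; [now rewrite Rmult_0_l, Rminus_0_r|].
    rewrite <- IH, <- (Hper (z - INR n * Q)) by (pose proof (pos_INR n); nra).
    rewrite S_INR. f_equal. ring. }
  assert (Hseq : is_lim_seq (fun n => f (z - INR n * Q)) L).
  { apply is_lim_comp_seq with (x := m_infty); [exact Hlim| |].
    - exists O. intros n _. discriminate.
    - now apply is_lim_seq_arith_m_infty. }
  apply (is_lim_seq_ext _ (fun _ => f z)) in Hseq; [|exact Hiter].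
  pose proof (is_lim_seq_unique _ _ Hseq) as HL.
  rewrite Lim_seq_const in HL. now injection HL.
Qed.

Lemma not_solitary_const_left (f : R -> R) (z0 L : R) :
  (forall z, z <= z0 -> f z = L) -> ~ solitary f.
Proof.
  intros Hconst [Huniq _].
  assert (Hext : forall z, z <= z0 - 1 -> local_extremum f z).
  { intros z Hz. left. exists 1. split; [lra|].
    intros y Hy. apply Rabs_def2 in Hy as [Hy _].
    rewrite !Hconst by lra. lra. }
  pose proof (Huniq (z0 - 1) (z0 - 2)
                (Hext (z0 - 1) ltac:(lra)) (Hext (z0 - 2) ltac:(lra))).
  lra.
Qed.

Lemma wave_junction (V : Type) (E : nat -> Prop) (src tgt : nat -> V)
  (ell a b d c : nat -> R) (phi : nat -> R -> R) (j k : nat) :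
  (forall i, E i -> src i <> tgt i) ->
  solves_BBMG E src tgt ell a b d (wave c phi) ->
  E j -> E k -> tgt j = src k -> 0 < c j -> forall t, 0 <= t ->
  phi k (- c k * t) = phi j (- c j * (t - ell j / c j)).
Proof.
  intros Hloop [_ [Hcont _]] Ej Ek Hjk Hcj t Ht.
  assert (Hneq : j <> k) by (intros ->; exact (Hloop k Ek (eq_sym Hjk))).
  assert (Hj : incident src tgt j (tgt j)) by (right; reflexivity).
  assert (Hk : incident src tgt k (tgt j)) by (left; congruence).
  assert (Hv : in_Vr E src tgt (tgt j)) by (exists j, k; auto).
  pose proof (Hcont _ Hv t Ht j k Ej Ek Hj Hk) as Hsame.
  unfold wave, Defs.pos in Hsame.
  destruct (excluded_middle_informative (tgt j = tgt j)) as [_|]; [|easy].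
  destruct (excluded_middle_informative (tgt k = tgt j)).
  { exfalso. apply (Hloop k Ek). congruence. }
  replace (- c k * t) with (0 - c k * t) by ring.
  rewrite <- Hsame. f_equal. field. lra.
Qed.

Fixpoint delay_sum (tau : nat -> R) (k : nat) : R :=
  match k with O => 0 | S k' => delay_sum tau k' + tau k' end.

Lemma delay_sum_ge0 (tau : nat -> R) (n : nat) :
  (forall k, (k < n)%nat -> 0 <= tau k) -> forall k, (k <= n)%nat -> 0 <= delay_sum tau k.
Proof.
  intros Htau k. induction k as [|k IH]; intros Hk; simpl; [lra|].
  pose proof (IH ltac:(lia)). pose proof (Htau k ltac:(lia)). lra.
Qed.

Lemma delay_chain (h : nat -> R -> R) (tau : nat -> R) (n : nat) :
  (forall k, (k < n)%nat -> 0 <= tau k) ->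
  (forall k, (S k < n)%nat -> forall t, 0 <= t -> h (S k) t = h k (t - tau k)) ->
  forall k, (k < n)%nat -> forall t, delay_sum tau k <= t ->
    h k t = h O (t - delay_sum tau k).
Proof.
  intros Htau Hstep k. induction k as [|k IH]; intros Hk t Ht.
  - simpl. f_equal. ring.
  - simpl in Ht. pose proof (delay_sum_ge0 tau n Htau k ltac:(lia)).
    pose proof (Htau k ltac:(lia)).
    rewrite Hstep, IH by (lia || lra). simpl. f_equal. ring.
Qed.

Lemma circuit_profile_periodic (V : Type) (E : nat -> Prop) (src tgt : nat -> V)
  (ell a b d c : nat -> R) (phi : nat -> R -> R) (l : list nat) :
  (forall i, E i -> src i <> tgt i) ->
  (forall i, E i -> 0 < ell i) ->
  (forall i, E i -> 0 < c i) ->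
  solves_BBMG E src tgt ell a b d (wave c phi) ->
  (1 <= length l)%nat -> (forall j, In j l -> E j) ->
  (forall i, (S i < length l)%nat -> tgt (nth i l 0%nat) = src (nth (S i) l 0%nat)) ->
  tgt (last l 0%nat) = src (hd 0%nat l) ->
  exists Q, 0 < Q /\ forall z, z <= 0 -> phi (hd 0%nat l) (z - Q) = phi (hd 0%nat l) z.
Proof.
  intros Hloop Hell Hc Hsol Hlen HinE Hchain Hwrap.
  set (e := fun k => nth k l 0%nat).
  set (h := fun k t => phi (e k) (- c (e k) * t)).
  set (tau := fun k => ell (e k) / c (e k)).
  assert (HE : forall k, (k < length l)%nat -> E (e k)).
  { intros k Hk. apply HinE, nth_In, Hk. }
  assert (Htau : forall k, (k < length l)%nat -> 0 < tau k).
  { intros k Hk. apply Rdiv_lt_0_compat; auto. }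
  assert (Hjunction : forall j k, (j < length l)%nat -> (k < length l)%nat ->
            tgt (e j) = src (e k) -> forall t, 0 <= t -> h k t = h j (t - tau j)).
  { intros j k Hj Hk Hjk t Ht.
    apply (wave_junction V E src tgt ell a b d c phi); auto. }
  assert (Hdelay := delay_chain h tau (length l)
                      (fun k Hk => Rlt_le _ _ (Htau k Hk))
                      (fun k Hk => Hjunction k (S k) ltac:(lia) Hk (Hchain k Hk))).
  destruct (length l) as [|m] eqn:Hn; [lia|].
  assert (Hlast : last l 0%nat = e m).
  { unfold e. clear - Hn. revert m Hn.
    induction l as [|x [|y l] IH]; intros [|m] Hm; simpl in *; try lia; auto. }
  assert (Hhd : hd 0%nat l = e O) by (unfold e; destruct l; reflexivity).
  rewrite Hlast, Hhd in *.
  pose proof (delay_sum_ge0 tau (S m) (fun k Hk => Rlt_le _ _ (Htau k Hk)) m ltac:(lia))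
    as Hsum_ge0.
  pose proof (Htau m ltac:(lia)) as Htau_m.
  set (P := delay_sum tau (S m)).
  assert (HP : P = delay_sum tau m + tau m) by reflexivity.
  assert (Hc0 : 0 < c (e O)) by (apply Hc, HE; lia).
  assert (Hper : forall t, P <= t -> h O t = h O (t - P)).
  { intros t Ht.
    rewrite (Hjunction m O ltac:(lia) ltac:(lia) Hwrap), Hdelay by (lia || lra).
    f_equal. lra. }
  exists (c (e O) * P). split; [apply Rmult_lt_0_compat; lra|].
  intros z Hz.
  assert (Hz' : 0 <= - z / c (e O)) by (apply Rdiv_le_0_compat; lra).
  pose proof (Hper (- z / c (e O) + P) ltac:(lra)) as Hz_per.
  unfold h in Hz_per.
  replace (- z / c (e O) + P - P) with (- z / c (e O)) in Hz_per by ring.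
  replace (z - c (e O) * P) with (- c (e O) * (- z / c (e O) + P)) by (field; lra).
  rewrite Hz_per. f_equal. field. lra.
Qed.

Theorem lemma7p1 (V : Type) (E : nat -> Prop) (src tgt : nat -> V)
  (ell a b d : nat -> R) :
  is_network E src tgt ell ->
  has_directed_circuit E src tgt ->
  (forall i, E i -> 0 < a i) ->
  (forall i, E i -> b i <> 0) ->
  ~ (exists (c : nat -> R) (phi : nat -> R -> R),
       travelling_wave E src tgt ell a b d c phi /\
       (forall i, E i -> 0 < c i) /\
       (forall i, E i -> solitary (phi i)) /\
       nonconstant_on E ell (wave c phi)).
Proof.
  intros [_ [_ [Hell [Hloop _]]]] [l [Hlen [HinE [Hchain Hwrap]]]] _ _
    [c [phi [[_ [_ Hsol]] [Hc [Hsolitary _]]]]].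
  destruct (circuit_profile_periodic V E src tgt ell a b d c phi l Hloop Hell Hc Hsol
              ltac:(lia) HinE Hchain Hwrap) as [Q [HQ Hper]].
  assert (HE0 : E (hd 0%nat l)) by (destruct l; [simpl in Hlen; lia|now apply HinE; left]).
  destruct (Hsolitary _ HE0) as [_ [_ [L HL]]].
  apply (not_solitary_const_left (phi (hd 0%nat l)) 0 L); [|exact (Hsolitary _ HE0)].
  exact (periodic_left_is_lim_const _ 0 Q L HQ Hper HL).
Qed.
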